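(* Let $p$ be a prime, $Y$ a $\mathbb{Q}$-vector space, $f:\mathbb{Q}_p\to Y$, $s\ge1$, $(N_1,\dots,N_s)\in\mathbb{Z}^s$ and $(a_1,\dots,a_s)\in\mathbb{Q}_p^s$. If $\Delta_{h_1h_2\cdots h_s}f(x)=0$ for all $x\in\mathbb{Q}_p$ and all $(h_1,\dots,h_s)\in\left(\mathbb{Q}_p\setminus(a_1+p^{-N_1}\mathbb{Z}_p)\right)\times\cdots\times\left(\mathbb{Q}_p\setminus(a_s+p^{-N_s}\mathbb{Z}_p)\right)$, then $\Delta_{h_1h_2\cdots h_s}f(x)=0$ for all $(x,h_1,\dots,h_s)\in\mathbb{Q}_p^{s+1}$.
   Context: $\mathbb{Q}_p$ is the field of $p$-adic numbers with $p$-adic absolute value $|\cdot|_p$, $\mathbb{Z}_p=\{x:|x|_p\le1\}$, and $a+p^{-N}\mathbb{Z}_p=\{a+p^{-N}z:z\in\mathbb{Z}_p\}$. $\Delta_hf(x)=f(x+h)-f(x)$ and $\Delta_{h_1h_2\cdots h_s}f(x)=\Delta_{h_1}\left(\Delta_{h_2\cdots h_s}f\right)(x)$ for $s\ge2$. *)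

(* A concrete model of the field Q_p of p-adic numbers
   (as an additive group together with multiplication/division by p),
   built as the inverse limit  Q_p = lim_n Q_p / p^n Z_p,
   using  Q_p / p^n Z_p  ~=  Z[1/p] / p^n Z  with canonical representatives
   in  Z[1/p] ∩ [0, p^n). *)
From HB Require Import structures.
From mathcomp Require Import all_boot all_order all_algebra.
Set Implicit Arguments. Unset Strict Implicit. Unset Printing Implicit Defensive.
Import Order.TTheory GRing.Theory Num.Theory.
Local Open Scope ring_scope.

Definition pw (p n : nat) : rat := (p%:R) ^+ n.

Definition rmod (r q : rat) : rat := r - (Num.floor (r / q))%:~R * q.

Lemma rmod_range r q : 0 < q -> 0 <= rmod r q < q.
Proof.
move=> q0; rewrite /rmod subr_ge0 ltrBlDl.
have /andP[h1 h2] := floor_itv (r / q).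
rewrite -ler_pdivlMr // h1 /=.
by rewrite ltr_pdivrMr // intrD mulrDl mul1r in h2.
Qed.

Definition dyadic (p : nat) (r : rat) : Prop :=
  exists k : nat, r * pw p k \is a Num.int.

Definition coherent (p : nat) (s : nat -> rat) : Prop :=
  forall n, (s n.+1 - s n) / pw p n \is a Num.int.

(* A p-adic number x is encoded by the sequence (x_n)_n where x_n is the
   unique element of Z[1/p] ∩ [0, p^n) with x ≡ x_n (mod p^n Z_p). *)
Record Qp (p : nat) : Type := MkQp {
  qp_seq : nat -> rat;
  qp_range : forall n, 0 <= qp_seq n < pw p n;
  qp_dyadic : forall n, dyadic p (qp_seq n);
  qp_coh : coherent p qp_seq }.

Lemma qp_pos p (x : Qp p) : (0 < p)%N.
Proof.
case: p x => // x; have /andP[h1 h2] := qp_range x 1.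
by have := le_lt_trans h1 h2; rewrite /pw expr1 ltxx.
Qed.

Lemma pw_gt0 p n : (0 < p)%N -> 0 < pw p n.
Proof. by move=> hp; rewrite /pw exprn_gt0 // ltr0n. Qed.

Lemma dyadicD p a b : dyadic p a -> dyadic p b -> dyadic p (a + b).
Proof.
move=> [k ha] [l hb]; exists (k + l)%N.
rewrite /pw /= exprD mulrDl mulrA; apply: rpredD.
  by apply: rpredM => //; rewrite rpredX ?natr_int.
by rewrite mulrCA; apply: rpredM => //; rewrite rpredX ?natr_int.
Qed.

Lemma dyadicMz p a m : dyadic p a -> m \is a Num.int -> dyadic p (m * a).
Proof. by move=> [k ha] hm; exists k; rewrite -mulrA rpredM. Qed.

Lemma dyadic_int p m : m \is a Num.int -> dyadic p m.
Proof. by move=> hm; exists 0%N; rewrite /pw expr0 mulr1. Qed.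

Lemma pw_int p n : pw p n \is a Num.int.
Proof. by rewrite rpredX ?natr_int. Qed.

Lemma rmod_dyadic p r q : dyadic p r -> q \is a Num.int -> dyadic p (rmod r q).
Proof.
move=> hr hq; rewrite /rmod; apply: dyadicD => //.
rewrite -mulNr; apply: dyadic_int; by rewrite rpredM ?rpredN ?intr_int.
Qed.

Lemma rmod_aux (A B c d q p : rat) : q != 0 ->
  (A - c * (q * p) - (B - d * q)) / q = (A - B) / q - c * p + d.
Proof.
move=> q0; rewrite -[RHS](mulfK q0); congr (_ / _).
rewrite mulrDl mulrBl divfK // opprB [q * p]mulrC mulrA.
rewrite -!addrA; congr (A + _).
by rewrite [RHS]addrCA [- B + _]addrC.
Qed.

Lemma norm_coh p s : (0 < p)%N -> coherent p s ->
  coherent p (fun n => rmod (s n) (pw p n)).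
Proof.
move=> hp hc n; rewrite /rmod.
have q0 : pw p n != 0 by rewrite gt_eqF // pw_gt0.
set f1 := Num.floor _; set f0 := Num.floor _.
have -> : (s n.+1 - f1%:~R * pw p n.+1 - (s n - f0%:~R * pw p n)) / pw p n
   = (s n.+1 - s n) / pw p n - f1%:~R * p%:R + f0%:~R.
  rewrite /pw exprSr.
  by rewrite rmod_aux.
apply: rpredD; last exact: intr_int.
by apply: rpredB; [exact: hc | apply: rpredM; [exact: intr_int| exact: natr_int]].
Qed.

Definition qp_norm p (s : nat -> rat) (hp : (0 < p)%N)
  (hd : forall n, dyadic p (s n)) (hc : coherent p s) : Qp p :=
  @MkQp p (fun n => rmod (s n) (pw p n))
    (fun n => rmod_range (s n) (pw_gt0 n hp))
    (fun n => rmod_dyadic (hd n) (pw_int p n))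
    (norm_coh hp hc).

Lemma add_dyadic p (x y : Qp p) n : dyadic p (qp_seq x n + qp_seq y n).
Proof. exact: dyadicD (qp_dyadic x n) (qp_dyadic y n). Qed.

Lemma add_coh p (x y : Qp p) : coherent p (fun n => qp_seq x n + qp_seq y n).
Proof.
move=> n; rewrite opprD addrACA mulrDl.
by rewrite rpredD ?(qp_coh x n) ?(qp_coh y n).
Qed.

Definition qp_add p (x y : Qp p) : Qp p :=
  qp_norm (qp_pos x) (add_dyadic x y) (add_coh x y).

Lemma opp_dyadic p (x : Qp p) n : dyadic p (- qp_seq x n).
Proof.
by rewrite -mulN1r; apply: dyadicMz (qp_dyadic x n) _; rewrite rpredN rpred1.
Qed.

Lemma opp_coh p (x : Qp p) : coherent p (fun n => - qp_seq x n).
Proof. by move=> n; rewrite -opprD mulNr rpredN (qp_coh x n). Qed.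

Definition qp_opp p (x : Qp p) : Qp p :=
  qp_norm (qp_pos x) (opp_dyadic x) (opp_coh x).

Lemma mulp_dyadic p (x : Qp p) n : dyadic p (p%:R * qp_seq x n).
Proof. exact: dyadicMz (qp_dyadic x n) (natr_int _ _). Qed.

Lemma mulp_coh p (x : Qp p) : coherent p (fun n => p%:R * qp_seq x n).
Proof.
by move=> n; rewrite -mulrBr -mulrA rpredM ?natr_int ?(qp_coh x n).
Qed.

Definition qp_mulp p (x : Qp p) : Qp p :=
  qp_norm (qp_pos x) (mulp_dyadic x) (mulp_coh x).

Lemma divp_dyadic p (x : Qp p) n : dyadic p (qp_seq x n.+1 / p%:R).
Proof.
have p0 : (p%:R : rat) != 0 by rewrite pnatr_eq0 -lt0n (qp_pos x).
have [k hk] := qp_dyadic x n.+1; exists k.+1.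
by rewrite /pw exprS mulrA divfK.
Qed.

Lemma divp_coh p (x : Qp p) : coherent p (fun n => qp_seq x n.+1 / p%:R).
Proof.
move=> n; have := qp_coh x n.+1.
by rewrite /pw exprSr invfM mulrA -mulrBl -mulrA [_^-1 * _]mulrC mulrA.
Qed.

Definition qp_divp p (x : Qp p) : Qp p :=
  qp_norm (qp_pos x) (divp_dyadic x) (divp_coh x).

(* scaling by p^(-N), N : int *)
Definition qp_scale p (N : int) (x : Qp p) : Qp p :=
  match N with
  | Posz n => iter n (@qp_divp p) x
  | Negz n => iter n.+1 (@qp_mulp p) x
  end.

(* Z_p = {x : |x|_p <= 1} = kernel of Q_p -> Q_p / Z_p *)
Definition in_Zp p (x : Qp p) : Prop := qp_seq x 0 = 0.

Definition in_coset p (a : Qp p) (N : int) (h : Qp p) : Prop :=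
  exists2 z, in_Zp z & h = qp_add a (qp_scale N z).

Fixpoint delta p (Y : zmodType) (f : Qp p -> Y) (hs : seq (Qp p)) (x : Qp p) : Y :=
  match hs with
  | [::] => f x
  | h :: hs' => delta f hs' (qp_add x h) - delta f hs' x
  end.

From mathcomp Require Import all_boot all_order all_algebra.
From Stdlib Require Import ProofIrrelevance FunctionalExtensionality.
From mathcomp Require Import ring.
Set Implicit Arguments. Unset Strict Implicit. Unset Printing Implicit Defensive.
Import Order.TTheory GRing.Theory Num.Theory.
Local Open Scope ring_scope.

(* First, Δ_{h_1 ... h_s} f (x) is additive in each h_i in
   the cocycle sense  Δ_{.., u+v, ..} f (x) = Δ_{.., u, ..} f (x+v)
   + Δ_{.., v, ..} f (x)  ([delta_split]); hence if in every coordinate each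
   element is a sum of two "good" increments, vanishing on good increments
   propagates to all increments, one coordinate at a time ([delta_all]).
   Second, every h ∈ Q_p is a sum of two elements outside a given coset
   a + p^-N Z_p ([coset_compl_split]): membership forces the fractional part
   to be ≡ frac a modulo p^-M Z (M = max(N, 0), [in_coset_frac]), and among
   the three constants u = j / p^(M+2), j < 3, whose fractional parts are
   pairwise incongruent, at most one can make u, and at most one h - u, lie in
   the coset. *)

Lemma rmod_sub_int (r q : rat) : q \is a Num.int -> rmod r q - r \is a Num.int.
Proof. by move=> hq; rewrite /rmod addrAC subrr add0r rpredN rpredM // intr_int. Qed.

Lemma rmodDl (r t q : rat) : q != 0 -> rmod (rmod r q + t) q = rmod (r + t) q.
Proof.
move=> q0; rewrite /rmod [rmod _ _ + _]addrAC mulrDl mulNr mulfK //.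
rewrite -intrN floorDrz ?intr_int // intrKfloor intrD mulrDl.
by rewrite intrN; ring.
Qed.

Lemma rmodDr (r t q : rat) : q != 0 -> rmod (t + rmod r q) q = rmod (t + r) q.
Proof. by move=> q0; rewrite addrC rmodDl // addrC. Qed.

Lemma rmod_id (r q : rat) : 0 < q -> 0 <= r < q -> rmod r q = r.
Proof.
move=> q0 /andP[r0 rq]; rewrite /rmod (@floor_def _ _ 0) ?mul0r ?subr0 //.
by rewrite add0r divr_ge0 ?(ltW q0) //= -[1%:~R]/1 ltr_pdivrMr // mul1r.
Qed.

Lemma rmod_scaled_int (r q P : rat) :
  r * P \is a Num.int -> q * P \is a Num.int -> rmod r q * P \is a Num.int.
Proof. by move=> hr hq; rewrite /rmod mulrBl -mulrA rpredB // rpredM // intr_int. Qed.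

Lemma qp_ext p (x y : Qp p) : (forall n, qp_seq x n = qp_seq y n) -> x = y.
Proof.
case: x y => sx rx dx cx [sy ry dy cy] /= /functional_extensionality e; subst sy.
by rewrite (proof_irrelevance _ rx ry) (proof_irrelevance _ dx dy)
  (proof_irrelevance _ cx cy).
Qed.

(* An element of Q_p witnesses p > 0, so the moduli p^n are nonzero. *)
Lemma qp_pw_neq0 p (x : Qp p) n : pw p n != 0.
Proof. by rewrite gt_eqF // pw_gt0 // (qp_pos x). Qed.

Lemma qp_addC p (x y : Qp p) : qp_add x y = qp_add y x.
Proof. by apply: qp_ext => n /=; rewrite addrC. Qed.

Lemma qp_addA p (x y z : Qp p) : qp_add x (qp_add y z) = qp_add (qp_add x y) z.
Proof.
apply: qp_ext => n /=; have q0 := qp_pw_neq0 x n.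
by rewrite rmodDr // rmodDl // addrA.
Qed.

Lemma qp_addNK p (u h : Qp p) : qp_add u (qp_add h (qp_opp u)) = h.
Proof.
apply: qp_ext => n /=; have q0 := qp_pw_neq0 u n.
rewrite rmodDr // addrA rmodDr // addrAC subrr add0r rmod_id //.
  exact: pw_gt0 (qp_pos u).
exact: qp_range.
Qed.

(* The fractional part of x, i.e. its representative in Z[1/p] ∩ [0, 1). *)
Definition qp_frac p (x : Qp p) : rat := qp_seq x 0.

Lemma qp_fracD p (x y : Qp p) :
  qp_frac (qp_add x y) - (qp_frac x + qp_frac y) \is a Num.int.
Proof. exact: rmod_sub_int (pw_int p 0). Qed.

Lemma qp_fracN p (x : Qp p) : qp_frac (qp_opp x) + qp_frac x \is a Num.int.
Proof. by rewrite -[qp_frac x]opprK; exact: rmod_sub_int (pw_int p 0). Qed.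

Definition congr_mod (P r t : rat) : bool := (r - t) * P \is a Num.int.

Lemma congr_mod_sym P r t : congr_mod P r t -> congr_mod P t r.
Proof. by rewrite /congr_mod -opprB mulNr rpredN. Qed.

Lemma congr_mod_trans P r t u :
  congr_mod P r t -> congr_mod P t u -> congr_mod P r u.
Proof.
by rewrite /congr_mod => hrt htu; rewrite -[r](subrK t) -addrA mulrDl rpredD.
Qed.

Lemma congr_mod_int P r t :
  P \is a Num.int -> r - t \is a Num.int -> congr_mod P r t.
Proof. by move=> hP hrt; rewrite /congr_mod rpredM. Qed.

Lemma Zp_seq_int p (z : Qp p) : in_Zp z -> forall m, qp_seq z m \is a Num.int.
Proof.
move=> hz; elim=> [|m IH]; first by rewrite hz.
rewrite -[qp_seq z m.+1](subrK (qp_seq z m)) rpredD //.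
by rewrite -(divfK (qp_pw_neq0 z m) (_ - _)) rpredM ?pw_int ?(qp_coh z m).
Qed.

Lemma divp_iter_int p (x : Qp p) : (forall m, qp_seq x m \is a Num.int) ->
  forall n m, qp_seq (iter n (@qp_divp p) x) m * pw p n \is a Num.int.
Proof.
move=> hx; elim=> [|n IH] m /=; first by rewrite /pw expr0 mulr1 hx.
have p0 : (p%:R : rat) != 0 by rewrite pnatr_eq0 -lt0n (qp_pos x).
apply: rmod_scaled_int; last by rewrite rpredM ?pw_int.
by rewrite /pw exprS mulrA divfK // IH.
Qed.

Lemma mulp_iter_Zp p (z : Qp p) n : in_Zp z -> in_Zp (iter n (@qp_mulp p) z).
Proof.
rewrite /in_Zp => hz; elim: n => [|n IH] //=.
by rewrite IH mulr0 rmod_id // ?lexx ?pw_gt0 ?(qp_pos z).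
Qed.

(* The exponent M = max(N, 0): p^-N Z_p ⊆ p^-M Z_p. *)
Definition coset_exp (N : int) : nat := if N is Posz n then n else 0%N.

Lemma scale_Zp_frac p (N : int) (z : Qp p) : in_Zp z ->
  qp_frac (qp_scale N z) * pw p (coset_exp N) \is a Num.int.
Proof.
case: N => n hz /=; first exact: divp_iter_int (Zp_seq_int hz) n 0.
by have := mulp_iter_Zp n.+1 hz; rewrite /in_Zp /qp_frac /= => ->; rewrite mul0r.
Qed.

Lemma in_coset_frac p (a h : Qp p) N : in_coset a N h ->
  congr_mod (pw p (coset_exp N)) (qp_frac h) (qp_frac a).
Proof.
move=> [z hz ->]; set w := qp_scale N z.
apply: (@congr_mod_trans _ _ (qp_frac a + qp_frac w)).
  by apply: congr_mod_int; [exact: pw_int | exact: qp_fracD].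
by rewrite /congr_mod addrC addKr (scale_Zp_frac N hz).
Qed.

Lemma int_notin_open_unit (x : rat) : 0 < x < 1 -> x \isn't a Num.int.
Proof.
move=> /andP[x0 x1]; apply/negP => /norm_intr_ge1 /(_ (lt0r_neq0 x0)).
by rewrite gtr0_norm // leNgt x1.
Qed.

Lemma qp_const_coh p (c : rat) : coherent p (fun _ => c).
Proof. by move=> n; rewrite subrr mul0r rpred0. Qed.

Definition qp_const p (hp : (0 < p)%N) (c : rat) (hc : dyadic p c) : Qp p :=
  qp_norm hp (fun _ => hc) (@qp_const_coh p c).

Lemma qp_const_frac p (hp : (0 < p)%N) c (hc : dyadic p c) :
  0 <= c < 1 -> qp_frac (qp_const hp hc) = c.
Proof. by move=> hc01; rewrite /qp_frac /= rmod_id // /pw expr0. Qed.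

(* The three test fractions j / p^(M+2), j < 3: pairwise incongruent
   modulo p^-M Z, yet all in [0, 1). *)
Definition test_frac p (M j : nat) : rat := j%:R / pw p M.+2.

Section TestFractions.
Variables (p M : nat).
Hypothesis hp : (2 <= p)%N.

Let pw_pos n : 0 < pw p n.
Proof. by rewrite pw_gt0 // (leq_trans _ hp). Qed.

Let p2_ge4 : (4 <= p ^ 2)%N.
Proof. by rewrite -mulnn (leq_mul hp hp). Qed.

Let pM2_ge4 : (4 <= p ^ M.+2)%N.
Proof.
by rewrite -[M.+2]addn2 expnD (leq_trans p2_ge4 (leq_pmull _ _)) ?expn_gt0 ?(ltnW hp).
Qed.

Lemma test_frac_dyadic j : dyadic p (test_frac p M j).
Proof. by exists M.+2; rewrite divfK ?natr_int // gt_eqF. Qed.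

Lemma test_frac_range j : (j < 3)%N -> 0 <= test_frac p M j < 1.
Proof.
move=> hj; rewrite divr_ge0 ?ler0n ?(ltW (pw_pos _)) //= ltr_pdivrMr // mul1r.
by rewrite /pw -natrX ltr_nat (leq_trans hj (ltnW pM2_ge4)).
Qed.

Lemma test_frac_apart i j : (i < j < 3)%N ->
  ~~ congr_mod (pw p M) (test_frac p M j) (test_frac p M i).
Proof.
move=> /andP[ij j3]; apply: int_notin_open_unit.
have -> : (test_frac p M j - test_frac p M i) * pw p M = (j - i)%:R / pw p 2.
  rewrite /test_frac -mulrBl -natrB ?(ltnW ij) // /pw -[M.+2]addn2 exprD.
  by field; rewrite expf_neq0 // pnatr_eq0 -lt0n (ltnW hp).
apply/andP; split; first by rewrite divr_gt0 // ltr0n subn_gt0.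
rewrite ltr_pdivrMr // mul1r /pw -natrX ltr_nat.
exact: leq_ltn_trans (leq_subr i j) (leq_trans j3 (ltnW p2_ge4)).
Qed.
End TestFractions.

Lemma three_avoid (b c : nat -> bool) :
  (forall i j, (i < j < 3)%N -> ~~ (b i && b j)) ->
  (forall i j, (i < j < 3)%N -> ~~ (c i && c j)) ->
  exists2 j, (j < 3)%N & ~~ b j && ~~ c j.
Proof.
move=> hb hc.
have : [|| ~~ b 0 && ~~ c 0, ~~ b 1 && ~~ c 1 | ~~ b 2 && ~~ c 2].
  move: (hb 0 1 erefl) (hb 0 2 erefl) (hb 1 2 erefl).
  move: (hc 0 1 erefl) (hc 0 2 erefl) (hc 1 2 erefl).
  by case: (b 0) (b 1) (b 2) (c 0) (c 1) (c 2) => [] [] [] [] [] [].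
by case/or3P; [exists 0%N | exists 1%N | exists 2%N].
Qed.

(* Every h ∈ Q_p is u + v with u, v outside a + p^-N Z_p: take u the constant
   j / p^(M+2) for a suitable j < 3.  Membership of u (resp. v = h - u) forces
   j / p^(M+2) (resp. frac h - j / p^(M+2)) ≡ frac a mod p^-M Z, which by
   [test_frac_apart] happens for at most one j each. *)
Lemma coset_compl_split p (hp : (2 <= p)%N) (a : Qp p) (N : int) (h : Qp p) :
  exists u v, ~ in_coset a N u /\ ~ in_coset a N v /\ h = qp_add u v.
Proof.
set M := coset_exp N; set P := pw p M.
pose c j := test_frac p M j.
pose u j := qp_const (ltnW hp) (test_frac_dyadic M hp j).
pose v j := qp_add h (qp_opp (u j)).
have frac_u j : (j < 3)%N -> qp_frac (u j) = c j.
  by move=> hj; apply: qp_const_frac; exact: test_frac_range.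
have frac_v j : (j < 3)%N -> congr_mod P (qp_frac h - c j) (qp_frac (v j)).
  move=> hj; apply: congr_mod_int; first exact: pw_int.
  rewrite (_ : _ - _ = - ((qp_frac (v j) - (qp_frac h + qp_frac (qp_opp (u j))))
                          + (qp_frac (qp_opp (u j)) + qp_frac (u j)))).
    by rewrite rpredN; apply: rpredD; [exact: qp_fracD | exact: qp_fracN].
  by rewrite frac_u //; ring.
pose bu j := congr_mod P (c j) (qp_frac a).
pose bv j := congr_mod P (qp_frac h - c j) (qp_frac a).
have [j hj /andP[nbu nbv]] : exists2 j, (j < 3)%N & ~~ bu j && ~~ bv j.
  apply: three_avoid => i k hik;
    apply: contra (test_frac_apart M hp hik) => /andP[hi hk].
    exact: congr_mod_trans hk (congr_mod_sym hi).
  move: (congr_mod_trans hi (congr_mod_sym hk)); rewrite /congr_mod.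
  by rewrite (_ : _ - _ = c k - c i) //; ring.
exists (u j), (v j); split; [|split]; last by rewrite qp_addNK.
  by move/in_coset_frac; rewrite frac_u //; exact/negP.
move/in_coset_frac => hv; move/negP: nbv; apply.
exact: congr_mod_trans (frac_v j hj) hv.
Qed.

Lemma set_nth_id (T : Type) (d : T) (l : seq T) k :
  (k < size l)%N -> set_nth d l k (nth d l k) = l.
Proof. by elim: l k => [|y l IH] [|k] //= hk; rewrite IH. Qed.

Lemma delta_split p (Y : zmodType) (f : Qp p -> Y) (d : Qp p) (l : seq (Qp p))
    k x u v : (k < size l)%N ->
  delta f (set_nth d l k (qp_add u v)) x =
  delta f (set_nth d l k u) (qp_add x v) + delta f (set_nth d l k v) x.
Proof.
elim: l k x => [|h l IH] [|k] x //= hk.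
  by rewrite [qp_add u v]qp_addC qp_addA addrA subrK.
by rewrite !IH // -!qp_addA [qp_add h v]qp_addC opprD addrACA.
Qed.

(* If in every coordinate i the "good" increments split every element as a
   sum of two good ones, a finite difference vanishing on good increments
   vanishes on all increments: replace the coordinates one at a time. *)
Section CoordinatewiseSplitting.
Variables (p : nat) (Y : zmodType) (f : Qp p -> Y) (s : nat) (d : Qp p).
Variable good : 'I_s -> Qp p -> Prop.
Hypothesis good_split :
  forall i h, exists u v, good i u /\ good i v /\ h = qp_add u v.
Hypothesis delta_good : forall x l, size l = s ->
  (forall i : 'I_s, good i (nth d l i)) -> delta f l x = 0.

Lemma delta_good_from k : (k <= s)%N -> forall x l, size l = s ->
  (forall i : 'I_s, (k <= i)%N -> good i (nth d l i)) -> delta f l x = 0.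
Proof.
elim: k => [|k IH] hk x l hl hgood; first by apply: delta_good => // i; exact: hgood.
pose ik := Ordinal hk.
have [u [v [gu [gv e]]]] := good_split ik (nth d l k).
have good_set w : good ik w -> forall i : 'I_s, (k <= i)%N ->
    good i (nth d (set_nth d l k w) i).
  move=> gw i hi; rewrite nth_set_nth /=; case: eqP => [ei | nei].
    by rewrite (_ : i = ik) //; exact: val_inj.
  by apply: hgood; rewrite ltn_neqAle hi andbT eq_sym; exact/eqP.
have size_set w : size (set_nth d l k w) = s.
  by rewrite size_set_nth hl; exact/maxn_idPr.
rewrite -(@set_nth_id _ d l k) ?hl // e delta_split ?hl //.
by rewrite (IH (ltnW hk) _ _ (size_set u) (good_set u gu))
  (IH (ltnW hk) _ _ (size_set v) (good_set v gv)) addr0.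
Qed.

Lemma delta_all x l : size l = s -> delta f l x = 0.
Proof. by move=> hl; apply: (delta_good_from (leqnn s)) => // i; rewrite leqNgt ltn_ord. Qed.

End CoordinatewiseSplitting.

Theorem theorem9 (p : nat) (hp : prime p) (Y : lmodType rat) (f : Qp p -> Y)
  (s : nat) (hs1 : (1 <= s)%N) (N : 'I_s -> int) (a : 'I_s -> Qp p) :
  (forall (x : Qp p) (hs : s.-tuple (Qp p)),
     (forall i : 'I_s, ~ in_coset (a i) (N i) (tnth hs i)) ->
     delta f hs x = 0) ->
  forall (x : Qp p) (hs : s.-tuple (Qp p)), delta f hs x = 0.
Proof.
move=> vanish x hs.
pose good (i : 'I_s) h := ~ in_coset (a i) (N i) h.
apply: (@delta_all p Y f s x good) => [i h | y l hl hgood | ]; last exact: size_tuple.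
  exact: coset_compl_split (prime_gt1 hp) (a i) (N i) h.
have hl' : size l == s by rewrite hl.
by apply: (vanish y (Tuple hl')) => i; rewrite (tnth_nth x); exact: hgood.
Qed.
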